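(* In single-hop Peg Duotaire, if for every $k\in\mathbb{N}$ there exists a position with nim-value at least $k$, then the set $P\subseteq\{0,1\}^*$ of words $w$ such that the position $w$ is a $\mathcal{P}$-position is not a regular language.
   Context: Peg Duotaire is an impartial two-player game played on the infinite line of sites indexed by $\mathbb{Z}$, each site holding a peg or being a hole, with finitely many pegs. A word $w\in\{0,1\}^*$ denotes the position in which $w$ is written on consecutive sites ($1$ = peg, $0$ = hole) and all other sites are holes. A hop: for a peg at site $i$, a peg at site $i+d$ and a hole at site $i+2d$ ($d=\pm1$), move the peg from $i$ to $i+2d$ and remove the peg at $i+d$. In the single-hop version, each move consists of exactly one hop. Players alternate moves; a player unable to move loses. The nim-value of a position is the least nonnegative integer not among the nim-values of positions reachable in one move; a $\mathcal{P}$-position is one with nim-value $0$. *)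

From HB Require Import structures.
From mathcomp Require Import all_boot all_order all_algebra.
From mathcomp Require Import finmap.
Set Implicit Arguments. Unset Strict Implicit. Unset Printing Implicit Defensive.
Import GRing.Theory Num.Theory.
Local Open Scope fset_scope.
Local Open Scope ring_scope.

(* A position of Peg Duotaire: the finite set of sites (in Z) holding a peg. *)
Definition position := {fset int}.

Definition hop (S : position) (i d : int) : position :=
  ((S `\ i) `\ (i + d)) `|` [fset i + d *+ 2].

Definition hop_legal (S : position) (i d : int) : bool :=
  [&& i \in S, (i + d) \in S & (i + d *+ 2) \notin S].

Definition moves (S : position) : seq position :=
  flatten [seq [seq hop S i d | d <- [:: 1; -1] & hop_legal S i d]
          | i <- enum_fset S].

Definition mex (s : seq nat) : nat :=
  head 0%N [seq n <- iota 0 (size s).+1 | n \notin s].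

(* Grundy recursion with fuel; each move removes exactly one peg, so fuel
   #|S| suffices. *)
Fixpoint grundy_fuel (fuel : nat) (S : position) : nat :=
  match fuel with
  | 0%N => 0%N
  | fuel'.+1 => mex [seq grundy_fuel fuel' T | T <- moves S]
  end.

Definition nim_value (S : position) : nat := grundy_fuel (#|` S|).+1 S.

Definition word_pos (w : seq bool) : position :=
  [fset (i%:Z) | i in iota 0 (size w) & nth false w i].

Definition P_position (S : position) : bool := nim_value S == 0%N.

(* Regular languages over {0,1} (false = 0 = hole, true = 1 = peg),
   via deterministic finite automata. *)
Definition regular (L : seq bool -> Prop) : Prop :=
  exists (Q : finType) (q0 : Q) (delta : Q -> bool -> Q) (F : {set Q}),
    forall w, L w <-> foldl delta q0 w \in F.

From mathcomp Require Import all_boot all_order all_algebra finmap.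
From mathcomp Require Import zify.
(* Pegs far apart do not interact, so a position made of two well separated
   blocks A and B is the disjunctive sum of A and B; by the Sprague-Grundy
   argument it is a P-position iff A and B have the same nim-value. Nim-values
   are invariant under translation, so if the words u and v have different
   nim-values, the suffix 0^m u with m large distinguishes them: u 0^m u is a
   P-position and v 0^m u is not. Unbounded nim-values yield words of every
   nim-value, hence infinitely many Myhill-Nerode classes, which a finite
   automaton cannot have. *)

Set Implicit Arguments. Unset Strict Implicit. Unset Printing Implicit Defensive.
Import GRing.Theory Num.Theory.
Local Open Scope fset_scope.

Lemma head_filter_iota (p : pred nat) a n :
  has p (iota a n) ->
  p (head 0%N [seq k <- iota a n | p k]) /\
  forall k, (a <= k)%N -> (k < head 0%N [seq k <- iota a n | p k])%N -> ~~ p k.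
Proof.
elim: n a => [//|n IH] a /=.
case pa: (p a) => /= H; first by split=> // k ak ka; lia.
have [pH minH] := IH _ H; split=> // k ak kH.
case: (ltngtP a k) => [lt|gt|<-]; [exact: minH | lia | by rewrite pa].
Qed.

Lemma has_mex s : has (fun n => n \notin s) (iota 0 (size s).+1).
Proof.
apply/hasPn => allin.
have sub : {subset iota 0 (size s).+1 <= s} by move=> x /allin /negbNE.
by have := uniq_leq_size (iota_uniq 0 _) sub; rewrite size_iota ltnn.
Qed.

Lemma mex_notin s : mex s \notin s.
Proof. by have [] := head_filter_iota (has_mex s). Qed.

Lemma mem_lt_mex s k : (k < mex s)%N -> k \in s.
Proof. by have [_ minH] := head_filter_iota (has_mex s) => /(minH k isT)/negbNE. Qed.

Lemma eq_mex s1 s2 : s1 =i s2 -> mex s1 = mex s2.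
Proof.
move=> E; case: (ltngtP (mex s1) (mex s2)) => // /mem_lt_mex.
  by rewrite -E (negbTE (mex_notin _)).
by rewrite E (negbTE (mex_notin _)).
Qed.

Lemma movesP S T :
  reflect (exists i d, [/\ i \in S, d \in [:: 1; -1]%R, hop_legal S i d & T = hop S i d])
          (T \in moves S).
Proof.
apply: (iffP flattenP).
  case=> s /mapP [i iS ->] /mapP [d]; rewrite mem_filter => /andP [hl dm] ->.
  by exists i, d; split.
case=> i [d [iS dm hl ->]].
exists [seq hop S i d0 | d0 <- [:: 1; -1]%R & hop_legal S i d0]; first by apply/mapP; exists i.
by apply/mapP; exists d => //; rewrite mem_filter hl.
Qed.

Lemma step_cases (d : int) : d \in [:: 1; -1]%R -> d = 1%R \/ d = (-1)%R.
Proof. by rewrite !inE => /orP [] /eqP ->; [left|right]. Qed.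

Lemma card_move S T : T \in moves S -> (#|` T|).+1 = #|` S|.
Proof.
case/movesP=> i [d [iS /step_cases dm /and3P [_ idS nidS]] ->].
have ne : (i + d != i)%R by case: dm => ->; rewrite -subr_eq0 addrC addKr.
rewrite /hop fsetUC cardfsU1 !in_fsetD1 (negbTE nidS) !andbF /=.
by rewrite (cardfsD1 i S) iS (cardfsD1 (i + d)%R (S `\ i)) in_fsetD1 ne idS.
Qed.

Lemma grundy_fuel_stable n m S : (#|` S| < n)%N -> (#|` S| < m)%N ->
  grundy_fuel n S = grundy_fuel m S.
Proof.
elim: n m S => [|n IH] [|m] S //= hn hm.
by congr mex; apply/eq_in_map => T /card_move hT; apply: IH; rewrite -ltnS hT.
Qed.

Lemma nim_valueE S : nim_value S = mex [seq nim_value T | T <- moves S].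
Proof.
congr mex; apply/eq_in_map => T /card_move hT.
by apply: grundy_fuel_stable; lia.
Qed.

Lemma nim_value_move_neq S T : T \in moves S -> nim_value T != nim_value S.
Proof.
move=> hT; apply: contraNneq (mex_notin [seq nim_value T | T <- moves S]) => E.
by rewrite -nim_valueE -E; apply: map_f.
Qed.

Lemma nim_value_move_lt S k :
  (k < nim_value S)%N -> exists2 T, T \in moves S & nim_value T = k.
Proof. by rewrite nim_valueE => /mem_lt_mex /mapP [T hT ->]; exists T. Qed.

Lemma nim_value_eq0 S :
  (nim_value S == 0%N) = all (fun T => nim_value T != 0%N) (moves S).
Proof.
apply/idP/allP => [/eqP h T hT | H]; first by rewrite -h nim_value_move_neq.
case: (posnP (nim_value S)) => [//|/nim_value_move_lt [T hT e]].
by have := H T hT; rewrite e.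
Qed.

Section Translation.
Local Open Scope ring_scope.

Lemma hop_shift (S S' : position) (c i d : int) :
  (forall x, (x + c \in S') = (x \in S)) ->
  hop_legal S' (i + c) d = hop_legal S i d /\
  forall x, (x + c \in hop S' (i + c) d) = (x \in hop S i d).
Proof.
move=> H; split; first by rewrite /hop_legal !(addrAC i c) !H.
move=> x; rewrite /hop !in_fsetU !in_fsetD1 !in_fset1 !(addrAC i c).
by rewrite !(inj_eq (addIr c)) H.
Qed.

Lemma nim_value_shift (S S' : position) (c : int) :
  (forall x, (x + c \in S') = (x \in S)) -> nim_value S = nim_value S'.
Proof.
have [n] := ubnP #|` S|; elim: n S S' => [//|n IH] S S' hn H.
rewrite nim_valueE (nim_valueE S'); apply: eq_mex => k; apply/mapP/mapP.
  case=> T hT ->; case/movesP: (hT) => i [d [iS dm hl ET]]; subst T.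
  have [L M] := hop_shift i d H.
  exists (hop S' (i + c) d); last by apply: (IH _ _ _ M); rewrite -ltnS (card_move hT).
  by apply/movesP; exists (i + c), d; split => //; [rewrite H | rewrite L].
case=> _ /movesP [i' [d [iS dm hl ->]]] ->.
have [L M] := hop_shift (i' - c) d H; rewrite subrK in L M.
have hT : hop S (i' - c) d \in moves S.
  by apply/movesP; exists (i' - c), d; split => //; [rewrite -H subrK | rewrite -L].
exists (hop S (i' - c) d) => //.
by symmetry; apply: (IH _ _ _ M); rewrite -ltnS (card_move hT).
Qed.

End Translation.

Section SeparatedSum.
Local Open Scope ring_scope.

(* A hop moves a peg by two sites, but only next to a peg it removes, so the
   gap shrinks by at most one per move, as does the number of pegs. *)
Definition separated (A B : position) := forall a b, a \in A -> b \in B ->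
  a + (#|` A| + #|` B| + 2)%N%:Z <= b.

Lemma separated_gap A B a b : separated A B -> a \in A -> b \in B -> a + 3 <= b.
Proof.
move=> H aA bB; have := H a b aA bB; have : (0 < #|` A|)%N by rewrite (cardfsD1 a) aA.
move: (#|` A|) (#|` B|) => m n; lia.
Qed.

Lemma hop_unionl A B i d : separated A B -> i \in A -> d \in [:: 1; -1] ->
  hop_legal (A `|` B) i d = hop_legal A i d /\
  (hop_legal A i d -> hop (A `|` B) i d = hop A i d `|` B).
Proof.
move=> H iA /step_cases dc.
have nB1 : (i + d \in B) = false.
  by apply/negbTE/negP => /(separated_gap H iA); lia.
have nB2 : (i + d *+ 2 \in B) = false.
  by apply/negbTE/negP => /(separated_gap H iA); rewrite mulr2n; lia.
split; first by rewrite /hop_legal !in_fsetU iA nB1 nB2 !orbF.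
case/and3P=> _ idA _; apply/fsetP => x; rewrite !in_fsetU !in_fsetD1 !in_fset1.
case xB: (x \in B); last by rewrite in_fsetU xB !orbF.
have h1 := separated_gap H iA xB; have h2 := separated_gap H idA xB.
have -> : (x == i + d) = false by apply/negbTE/negP => /eqP e; lia.
have -> : (x == i) = false by apply/negbTE/negP => /eqP e; lia.
by rewrite in_fsetU xB /= !orbT.
Qed.

Lemma hop_unionr A B i d : separated A B -> i \in B -> d \in [:: 1; -1] ->
  hop_legal (A `|` B) i d = hop_legal B i d /\
  (hop_legal B i d -> hop (A `|` B) i d = A `|` hop B i d).
Proof.
move=> H iB /step_cases dc.
have nA1 : (i + d \in A) = false.
  by apply/negbTE/negP => /(separated_gap H)/(_ iB); lia.
have nA2 : (i + d *+ 2 \in A) = false.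
  by apply/negbTE/negP => /(separated_gap H)/(_ iB); rewrite mulr2n; lia.
split; first by rewrite /hop_legal !in_fsetU iB nA1 nA2 !orbT.
case/and3P=> _ idB _; apply/fsetP => x; rewrite !in_fsetU !in_fsetD1 !in_fset1.
case xA: (x \in A); last by rewrite in_fsetU xA.
have h1 := separated_gap H xA iB; have h2 := separated_gap H xA idB.
have -> : (x == i + d) = false by apply/negbTE/negP => /eqP e; lia.
have -> : (x == i) = false by apply/negbTE/negP => /eqP e; lia.
by rewrite in_fsetU xA.
Qed.

Lemma separated_movel A B A' : separated A B -> A' \in moves A -> separated A' B.
Proof.
move=> H hA'; have hc := card_move hA'.
case/movesP: hA' => i [d [iA /step_cases dc /and3P [_ idA _] EA']]; subst A'.
move=> a b; rewrite /hop !in_fsetU !in_fsetD1 in_fset1 => ha hb; move: hc; rewrite /hop.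
case/orP: ha => [/and3P [_ _ aA] | /eqP ->].
  have := H a b aA hb; move: (#|` _ `|` _|) (#|` A|) (#|` B|) => x y z; lia.
have := H _ b idA hb; rewrite mulr2n.
move: (#|` _ `|` _|) (#|` A|) (#|` B|) => x y z; lia.
Qed.

Lemma separated_mover A B B' : separated A B -> B' \in moves B -> separated A B'.
Proof.
move=> H hB'; have hc := card_move hB'.
case/movesP: hB' => i [d [iB /step_cases dc /and3P [_ idB _] EB']]; subst B'.
move=> a b ha; rewrite /hop !in_fsetU !in_fsetD1 in_fset1 => hb; move: hc; rewrite /hop.
case/orP: hb => [/and3P [_ _ bB] | /eqP ->].
  have := H a b ha bB; move: (#|` _ `|` _|) (#|` A|) (#|` B|) => x y z; lia.
have := H a i ha iB; have := H a _ ha idB; rewrite mulr2n.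
move: (#|` _ `|` _|) (#|` A|) (#|` B|) => x y z; lia.
Qed.

Lemma moves_union A B T : separated A B -> T \in moves (A `|` B) ->
  (exists2 A', A' \in moves A & T = A' `|` B) \/
  (exists2 B', B' \in moves B & T = A `|` B').
Proof.
move=> H /movesP [i [d [iAB dm hl ->]]].
case/fsetUP: iAB => [iA | iB].
  have [L M] := hop_unionl H iA dm; rewrite L in hl.
  by left; exists (hop A i d); [apply/movesP; exists i, d | exact: M].
have [L M] := hop_unionr H iB dm; rewrite L in hl.
by right; exists (hop B i d); [apply/movesP; exists i, d | exact: M].
Qed.

Lemma moves_unionl A B A' : separated A B -> A' \in moves A ->
  A' `|` B \in moves (A `|` B).
Proof.
move=> H /movesP [i [d [iA dm hl ->]]]; have [L M] := hop_unionl H iA dm.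
by apply/movesP; exists i, d; rewrite in_fsetU iA L M.
Qed.

Lemma moves_unionr A B B' : separated A B -> B' \in moves B ->
  A `|` B' \in moves (A `|` B).
Proof.
move=> H /movesP [i [d [iB dm hl ->]]]; have [L M] := hop_unionr H iB dm.
by apply/movesP; exists i, d; rewrite in_fsetU iB orbT L M.
Qed.

Lemma nim_value_union_eq0 A B : separated A B ->
  (nim_value (A `|` B) == 0%N) = (nim_value A == nim_value B).
Proof.
have [n] := ubnP (#|` A| + #|` B|)%N; elim: n A B => [//|n IH] A B hn H.
have IHl A' : A' \in moves A -> (nim_value (A' `|` B) == 0%N) = (nim_value A' == nim_value B).
  move=> hA'; apply: IH (separated_movel H hA').
  by move: (card_move hA') hn; move: (#|` A'|) (#|` A|) (#|` B|) => x y z; lia.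
have IHr B' : B' \in moves B -> (nim_value (A `|` B') == 0%N) = (nim_value A == nim_value B').
  move=> hB'; apply: IH (separated_mover H hB').
  by move: (card_move hB') hn; move: (#|` B'|) (#|` A|) (#|` B|) => x y z; lia.
case: (eqVneq (nim_value A) (nim_value B)) => E.
  rewrite nim_value_eq0; apply/allP => T /(moves_union H) [[A' hA' ->]|[B' hB' ->]].
    by rewrite IHl // -E nim_value_move_neq.
  by rewrite IHr // E eq_sym nim_value_move_neq.
apply/negbTE; rewrite nim_value_eq0; apply/allPn.
case: (ltngtP (nim_value A) (nim_value B)) E => // lt _.
  have [B' hB' e] := nim_value_move_lt lt.
  by exists (A `|` B'); [exact: moves_unionr | rewrite negbK IHr // e].
have [A' hA' e] := nim_value_move_lt lt.
by exists (A' `|` B); [exact: moves_unionl | rewrite negbK IHl // e].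
Qed.

End SeparatedSum.

Section Words.
Local Open Scope ring_scope.

Lemma nth_false_size (w : seq bool) j : nth false w j -> (j < size w)%N.
Proof. by case: ltnP => // le; rewrite nth_default. Qed.

Lemma mem_word_pos w (x : int) :
  (x \in word_pos w) = (0 <= x) && nth false w `|x|%N.
Proof.
apply/imfsetP/andP => [[j] | [x0 hx]].
  by rewrite inE /= => /andP [_ hj] ->.
exists `|x|%N; first by rewrite inE /= mem_iota /= (nth_false_size hx).
lia.
Qed.

Lemma card_word_pos w : (#|` word_pos w| <= count id w)%N.
Proof.
apply: leq_trans (leq_imfset_card _ _ _) _.
rewrite /enum_finmem /= filter_undup; apply: leq_trans (size_undup _) _.
rewrite size_filter -[in X in (_ <= X)%N](mkseq_nth false w) count_map.
by apply/eq_leq/eq_count.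
Qed.

Lemma nth_nseq_cat k (y : seq bool) j :
  nth false (nseq k false ++ y) j = if (j < k)%N then false else nth false y (j - k).
Proof. by rewrite nth_cat size_nseq nth_nseq; case: (j < k)%N. Qed.

Lemma word_pos_cat x m y :
  word_pos (x ++ nseq m false ++ y) =
  word_pos x `|` word_pos (nseq (size x + m) false ++ y).
Proof.
apply/fsetP => z; rewrite in_fsetU !mem_word_pos.
case: (boolP (0 <= z)) => //= hz.
rewrite nth_cat !nth_nseq_cat; case: (ltnP `|z|%N (size x)) => h.
  by rewrite (_ : (`|z| < size x + m)%N) ?orbF //; lia.
rewrite (nth_default false h) /= subnDA.
by have -> : (`|z| - size x < m)%N = (`|z| < size x + m)%N by lia.
Qed.

Lemma nim_value_pad k y :
  nim_value (word_pos (nseq k false ++ y)) = nim_value (word_pos y).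
Proof.
symmetry; apply: (@nim_value_shift _ _ k%:Z) => x; rewrite !mem_word_pos nth_nseq_cat.
case: (boolP (0 <= x)) => hx.
  have -> : (0 <= x + k%:Z) = true by lia.
  have -> : absz (x + k%:Z) = (absz x + k)%N by lia.
  by rewrite ltnNge leq_addl /= addnK.
case: (boolP (0 <= x + k%:Z)) => //= h.
by rewrite (_ : (absz (x + k%:Z)%R < k)%N) //; lia.
Qed.

Lemma separated_word_pos x m y : (size x + size y < m)%N ->
  separated (word_pos x) (word_pos (nseq (size x + m) false ++ y)).
Proof.
move=> hm a b; rewrite !mem_word_pos nth_nseq_cat => /andP [ha0 /nth_false_size ha].
case/andP=> hb0; case: ifP => // hb1 _.
have c1 := leq_trans (card_word_pos x) (count_size id x).
have c2 := card_word_pos (nseq (size x + m) false ++ y).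
move: c2; rewrite count_cat count_nseq mul0n => /leq_trans/(_ (count_size id y)) c2.
move: (#|` word_pos x|) (#|` word_pos (nseq (size x + m) false ++ y)|) c1 c2.
lia.
Qed.

Lemma exists_word_pos_nim_value (S : position) :
  exists w, nim_value (word_pos w) = nim_value S.
Proof.
pose M := \max_(x <- enum_fset S) `|x|%N.
have hM x : x \in S -> (`|x| <= M)%N by move=> hx; apply: leq_bigmax_seq.
exists (mkseq (fun j => (j%:Z - M%:Z) \in S) (2 * M).+1).
symmetry; apply: (@nim_value_shift _ _ M%:Z) => x; rewrite mem_word_pos.
case: (boolP (x \in S)) => hx.
  have hb := hM x hx.
  have -> : (0 <= x + M%:Z) = true by lia.
  rewrite nth_mkseq; last by lia.
  by have -> : (absz (x + M%:Z))%:Z - M%:Z = x by lia.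
case: (boolP (0 <= x + M%:Z)) => //= h.
case: (ltnP (absz (x + M%:Z)) (2 * M).+1) => h2.
  by rewrite nth_mkseq // (_ : (absz (x + M%:Z))%:Z - M%:Z = x) ?(negbTE hx) //; lia.
by rewrite nth_default // size_mkseq.
Qed.

Lemma exists_word_pos_nim_value_eq k :
  (exists S : position, (k <= nim_value S)%N) ->
  exists w, nim_value (word_pos w) = k.
Proof.
case=> S; rewrite leq_eqVlt => /orP [/eqP -> | /nim_value_move_lt [T _ <-]];
  exact: exists_word_pos_nim_value.
Qed.

Lemma P_position_word_gap x m y : (size x + size y < m)%N ->
  P_position (word_pos (x ++ nseq m false ++ y)) =
  (nim_value (word_pos x) == nim_value (word_pos y)).
Proof.
move=> hm; rewrite /P_position word_pos_cat nim_value_union_eq0 ?nim_value_pad //.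
exact: separated_word_pos.
Qed.

End Words.

Lemma regular_finite_index (L : seq bool -> Prop) : regular L ->
  forall f : nat -> seq bool,
  exists i j, i != j /\ forall z, L (f i ++ z) <-> L (f j ++ z).
Proof.
move=> [Q [q0 [delta [F HF]]]] f.
pose state (i : 'I_#|Q|.+1) := foldl delta q0 (f i).
have /injectivePn [i [j ij eq_state]] : ~~ injectiveb state.
  by apply/injectiveP => /leq_card; rewrite card_ord ltnn.
exists (val i), (val j); split => // z.
by rewrite !HF !foldl_cat; move: eq_state; rewrite /state => ->.
Qed.

Theorem lemma3 :
  (forall k : nat, exists S : position, (k <= nim_value S)%N) ->
  ~ regular (fun w => P_position (word_pos w)).
Proof.
move=> unbounded /regular_finite_index.
have has_word k : exists w, nim_value (word_pos w) == k.
  by have [w /eqP] := exists_word_pos_nim_value_eq (unbounded k); exists w.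
pose word_of k : seq bool := xchoose (has_word k).
have nim_word_of k : nim_value (word_pos (word_of k)) = k.
  exact/eqP/(xchooseP (has_word k)).
move/(_ word_of) => [i [j [ij equiv_ij]]].
pose m := (2 * (size (word_of i) + size (word_of j))).+1.
have := equiv_ij (nseq m false ++ word_of i).
rewrite !P_position_word_gap ?nim_word_of.
- by rewrite eq_sym (negbTE ij) => -[/(_ (eqxx i))].
- by rewrite /m; lia.
- by rewrite /m; lia.
Qed.
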